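(* Let $\Phi$ be a real, additive gain graph on $\{1,\dots,n\}$ with edge set $E$, and let $\mathbf{Q}=(Q_1,\dots,Q_n)\in(\mathbb{E}^d)^n$ with $Q_i\neq Q_j$ whenever $i,j$ are adjacent. Suppose the intersection $s$ of all hyperplanes of $\mathcal{H}(\Phi;\mathbf{Q})$ is nonempty. Then (a) $\Phi$ is balanced (i.e. $E$ is balanced), and (b) $s$ is the intersection of some subset of $\mathcal{H}(\Phi;\mathbf{Q})$ consisting of $d-\dim s$ hyperplanes, and any subset of $d-\dim s$ hyperplanes whose intersection is $s$ corresponds to an edge set of $\Phi$ that is a forest (contains no circle).
   Context: $\mathbb{E}^d$ is Euclidean $d$-space with distance $d(\cdot,\cdot)$; $\psi_{ij}(P)=d(P,Q_i)^2-d(P,Q_j)^2$. A real, additive gain graph $\Phi$ on vertex set $\{1,\dots,n\}$ is a finite graph (multiple edges allowed, every edge with two distinct endpoints) with gains $\phi(e;i,j)\in\mathbb{R}$ for each edge $e$ with endpoints $i,j$, satisfying $\phi(e;j,i)=-\phi(e;i,j)$. An edge set is balanced if every circle (simple closed path) in it has gain sum $0$ when read in a consistent direction. The Pythagorean arrangement $\mathcal{H}(\Phi;\mathbf{Q})$ consists of the hyperplanes $h(e)=\{P:\psi_{ij}(P)=\phi(e;i,j)\}$, one for each edge $e$ with endpoints $i,j$; a subset of hyperplanes corresponds to the set of edges indexing it. *)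

From HB Require Import structures.
From mathcomp Require Import all_boot all_order all_algebra.
From mathcomp Require Import reals.
Set Implicit Arguments. Unset Strict Implicit. Unset Printing Implicit Defensive.
Import Order.TTheory GRing.Theory Num.Theory.
Local Open Scope ring_scope.

Section PythArr.
Variables (R : realType) (n d : nat) (E : finType).
(* A gain graph on vertices 'I_n: every edge e has endpoints end1 e, end2 e
   (required distinct in the theorem), and gain phi(e; end1 e, end2 e) = phi e,
   so phi(e; end2 e, end1 e) = - phi e. *)
Variables (end1 end2 : E -> 'I_n) (phi : E -> R).

Definition joins (e : E) (u v : 'I_n) : bool :=
  ((end1 e == u) && (end2 e == v)) || ((end1 e == v) && (end2 e == u)).

Definition ogain (e : E) (u : 'I_n) : R := if end1 e == u then phi e else - phi e.

(* A circle in F: a simple closed path with k+2 >= 2 distinct vertices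
   vs 0, ..., vs (k+1) and distinct edges es i joining vs i and vs (i+1 mod k+2). *)
Definition is_circle_walk (F : {set E}) (k : nat)
    (vs : 'I_k.+2 -> 'I_n) (es : 'I_k.+2 -> E) : Prop :=
  injective vs /\ injective es /\ (forall i, es i \in F) /\
  (forall i, joins (es i) (vs i) (vs (ordS i))).

Definition has_circle (F : {set E}) : Prop :=
  exists k vs es, @is_circle_walk F k vs es.

Definition balanced (F : {set E}) : Prop :=
  forall k vs es, @is_circle_walk F k vs es ->
    \sum_(i < k.+2) ogain (es i) (vs i) = 0.

Definition forest (F : {set E}) : Prop := ~ has_circle F.

Definition sqdist (P Q : 'rV[R]_d) : R := \sum_(i < d) (P 0 i - Q 0 i) ^+ 2.

Variable Q : 'I_n -> 'rV[R]_d.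

Definition psi (i j : 'I_n) (P : 'rV[R]_d) : R := sqdist P (Q i) - sqdist P (Q j).

Definition hyp (e : E) (P : 'rV[R]_d) : Prop := psi (end1 e) (end2 e) P = phi e.

Definition inter (F : {set E}) (P : 'rV[R]_d) : Prop := forall e, e \in F -> hyp e P.

End PythArr.

Definition affine_dim (R : realType) (d : nat) (S : 'rV[R]_d -> Prop) (k : nat) : Prop :=
  exists (P0 : 'rV[R]_d) (V : {vspace 'rV[R]_d}),
    (forall P, S P <-> (P - P0) \in V) /\ \dim V = k.

From HB Require Import structures.
From mathcomp Require Import all_boot all_order all_algebra.
From mathcomp Require Import reals.
From mathcomp Require Import ring zify.
Set Implicit Arguments. Unset Strict Implicit. Unset Printing Implicit Defensive.
Import Order.TTheory GRing.Theory Num.Theory.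
Local Open Scope ring_scope.

(* Fix a point P0 of the intersection s.  Since psi_ij is affine with linear part
   -2 (Q_i - Q_j), every hyperplane h(e) is P0 + (Q_i - Q_j)^perp, so s = P0 + ker B^T
   where the rows of B are the normals Q_i - Q_j of the edges, and dim s = d - rank B.
   (a) The gains are potential differences: phi(e; i, j) = psi_ij(P0) = f i - f j with
   f i = d(P0, Q_i)^2, and potential differences telescope to 0 around every circle.
   (b) Rows of B spanning its row space give rank B = d - dim s hyperplanes cutting out s.
   Conversely, d - dim s hyperplanes cutting out s have linearly independent normals,
   whereas the oriented normals of a circle telescope to 0. *)

Section KernelOfTranspose.
Variables (F : fieldType) (n : nat).

Lemma mulmx_tr_eq0 m (x : 'rV[F]_n) (B : 'M_(m, n)) :
  x *m B^T = 0 <-> forall i, x *m (row i B)^T = 0.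
Proof.
have rowE i : x *m (row i B)^T = (row i (B *m x^T))^T.
  by rewrite row_mul trmx_mul trmxK.
rewrite -[x *m B^T]trmxK trmx_mul trmxK; split=> [/(congr1 trmx)|h].
  by rewrite trmxK trmx0 => h i; rewrite rowE h row0 trmx0.
rewrite -trmx0; congr (_^T); apply/row_matrixP=> i.
by rewrite row0; apply: trmx_inj; rewrite -rowE h trmx0.
Qed.

Lemma kermx_trS m1 m2 (A : 'M[F]_(m1, n)) (B : 'M_(m2, n)) :
  (A <= B)%MS -> (kermx B^T <= kermx A^T)%MS.
Proof.
case/submxP=> D ->; apply/sub_kermxP.
by rewrite trmx_mul mulmxA (sub_kermxP (submx_refl _)) mul0mx.
Qed.

Lemma row_free_kermx_tr m1 m2 (A : 'M[F]_(m1, n)) (B : 'M_(m2, n)) :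
  m1 = \rank B -> (kermx A^T <= kermx B^T)%MS -> row_free A.
Proof.
move=> m1B /mxrankS; rewrite !mxrank_ker !mxrank_tr => leAB.
have := rank_leq_row A; have := rank_leq_col A; have := rank_leq_col B.
by rewrite /row_free => *; apply/eqP; lia.
Qed.

End KernelOfTranspose.

Lemma affine_dim_submx (R : realType) d (S : 'rV[R]_d -> Prop) (K : 'M_d) P0 :
  (forall P, S P <-> (P - P0 <= K)%MS) -> affine_dim S (\rank K).
Proof.
move=> SK; exists P0, (limg (linfun (mulmxr (row_base K)))); split.
  move=> P; rewrite SK -(eq_row_base K); split.
    by case/submxP=> u ->; apply/memv_imgP; exists u; rewrite ?memvf ?lfunE.
  by case/memv_imgP=> u _; rewrite lfunE /= => ->; apply: submxMl.
rewrite limg_dim_eq; first by rewrite dimvf dim_matrix; lia.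
apply/eqP; rewrite capfv; apply/lker0P=> x y; rewrite !lfunE /=.
exact: (row_free_inj (row_base_free K)).
Qed.

Section PythagoreanArrangement.
Variables (R : realType) (n d : nat) (E : finType) (end1 end2 : E -> 'I_n).

Lemma oriented_diff (V : zmodType) (G : 'I_n -> V) e u v :
  joins end1 end2 e u v ->
  (if end1 e == u then G (end1 e) - G (end2 e) else G (end2 e) - G (end1 e))
    = G u - G v.
Proof.
case/orP=> /andP[/eqP-> /eqP->]; first by rewrite eqxx.
by case: eqP => [->|//]; rewrite !subrr.
Qed.

Lemma circle_telescope (V : zmodType) (G : 'I_n -> V) F k vs es :
  @is_circle_walk n E end1 end2 F k vs es ->
  \sum_(i < k.+2) (if end1 (es i) == vs i then G (end1 (es i)) - G (end2 (es i))
                   else G (end2 (es i)) - G (end1 (es i))) = 0.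
Proof.
case=> _ [_ [_ vs_es]]; under eq_bigr => i _ do rewrite (oriented_diff G (vs_es i)).
rewrite sumrB; apply/eqP; rewrite subr_eq0; apply/eqP.
exact: (reindex_inj (@ordS_inj _)).
Qed.

Variables (phi : E -> R) (Q : 'I_n -> 'rV[R]_d).

Definition normal (e : E) : 'rV[R]_d := Q (end1 e) - Q (end2 e).

Definition normal_mx (F : {set E}) : 'M[R]_(#|F|, d) :=
  \matrix_(i < #|F|) normal (enum_val i).

Lemma psiB i j P P0 :
  psi Q i j P - psi Q i j P0 = - 2 * ((P - P0) *m (Q i - Q j)^T) 0 0.
Proof.
rewrite /psi /sqdist mxE mulr_sumr -!sumrB; apply: eq_bigr => l _.
rewrite !mxE; ring.
Qed.

Lemma hyp_normal e P P0 : hyp end1 end2 phi Q e P0 ->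
  hyp end1 end2 phi Q e P <-> (P - P0) *m (normal e)^T = 0.
Proof.
have eq0 (M : 'M[R]_1) : M = 0 <-> M 0 0 = 0.
  by split=> [->|M0]; [rewrite mxE | apply/matrixP=> i j; rewrite !ord1 M0 mxE].
rewrite /hyp eq0 /normal => <-; have psiE := psiB (end1 e) (end2 e) P P0.
split=> [PeP0|nP].
  move: psiE; rewrite PeP0 subrr => /esym/eqP.
  by rewrite mulf_eq0 oppr_eq0 pnatr_eq0 => /eqP.
by apply/eqP; rewrite -subr_eq0 psiE nP mulr0.
Qed.

Lemma inter_subset (F1 F2 : {set E}) P :
  F1 \subset F2 -> inter end1 end2 phi Q F2 P -> inter end1 end2 phi Q F1 P.
Proof. by move=> /subsetP F12 sP e /F12; apply: sP. Qed.

Lemma inter_kermx F P P0 : inter end1 end2 phi Q F P0 ->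
  inter end1 end2 phi Q F P <-> (P - P0 <= kermx (normal_mx F)^T)%MS.
Proof.
move=> sP0; rewrite -(rwP sub_kermxP) mulmx_tr_eq0; split=> [sP i|sP e eF].
  by rewrite rowK -hyp_normal; [apply/sP | apply/sP0]; apply: enum_valP.
rewrite (hyp_normal _ (sP0 e eF)).
by have := sP (enum_rank_in eF e); rewrite rowK enum_rankK_in.
Qed.

Lemma inter_kermxS F1 F2 P0 : inter end1 end2 phi Q [set: E] P0 ->
  (forall P, inter end1 end2 phi Q F1 P -> inter end1 end2 phi Q F2 P) ->
  (kermx (normal_mx F1)^T <= kermx (normal_mx F2)^T)%MS.
Proof.
move=> sP0 F12; apply/row_subP=> i; set K1 := kermx _.
have sP0F F : inter end1 end2 phi Q F P0 by apply: inter_subset (subsetT F) sP0.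
have /(inter_kermx _ (sP0F F1))/F12/(inter_kermx _ (sP0F F2)) :
  (P0 + row i K1 - P0 <= K1)%MS by rewrite addrC addKr; apply: row_sub.
by rewrite addrC addKr.
Qed.

Lemma inter_balanced F P0 : inter end1 end2 phi Q F P0 -> balanced end1 end2 phi F.
Proof.
move=> sP0 k vs es circ.
rewrite -[RHS](circle_telescope (fun v => sqdist P0 (Q v)) circ).
apply: eq_bigr => i _; case: circ => _ [_ [esF _]].
by have := sP0 _ (esF i); rewrite /hyp /psi /ogain => <-; case: ifP; rewrite ?opprB.
Qed.

Lemma normal_mx_spanning_edges :
  exists F : {set E}, #|F| = \rank (normal_mx [set: E]) /\
                      (normal_mx [set: E] <= normal_mx F)%MS.
Proof.
set B := normal_mx _; pose f := maxrankfun B.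
set F := [set enum_val (f i) | i : 'I_(\rank B)].
exists F; split.
  rewrite card_imset ?card_ord // => i j /enum_val_inj; exact: maxrankfun_inj.
rewrite -(eq_maxrowsub B); apply/row_subP=> i; rewrite row_rowsub rowK.
have fiF : enum_val (f i) \in F by apply: imset_f.
have := row_sub (enum_rank_in fiF (enum_val (f i))) (normal_mx F).
by rewrite rowK enum_rankK_in.
Qed.

Lemma row_free_normal_mx_indep F : row_free (normal_mx F) ->
  forall c : E -> R, \sum_(e in F) c e *: normal e = 0 -> {in F, c =1 fun=> 0}.
Proof.
move=> freeF c dep e eF; pose u := \row_(i < #|F|) c (enum_val i).
have : u *m normal_mx F = 0 *m normal_mx F.
  rewrite mul0mx mulmx_sum_row -[RHS]dep [RHS]big_enum_val /=.
  by apply: eq_bigr => i _; rewrite rowK mxE.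
move/(row_free_inj freeF)/matrixP/(_ 0 (enum_rank_in eF e)).
by rewrite !mxE enum_rankK_in.
Qed.

Lemma row_free_normal_mx_forest F : row_free (normal_mx F) -> forest end1 end2 F.
Proof.
move=> freeF [k [vs [es circ]]]; have [_ [es_inj [esF _]]] := circ.
pose sgn i : R := if end1 (es i) == vs i then 1 else -1.
pose c e := \sum_(i < k.+2 | es i == e) sgn i.
have c_es i : c (es i) = sgn i.
  by rewrite /c (big_pred1 i) // => j; rewrite (inj_eq es_inj).
have : \sum_(e in F) c e *: normal e = 0.
  rewrite -[RHS](circle_telescope Q circ) (partition_big es (mem F)) //=.
  apply: eq_bigr => e eF; rewrite scaler_suml; apply: eq_bigr => i /eqP <-.
  by rewrite /sgn /normal; case: ifP; rewrite ?scale1r ?scaleN1r ?opprB.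
move/(row_free_normal_mx_indep freeF)/(_ _ (esF ord0))/eqP.
by rewrite c_es /sgn; case: ifP; rewrite ?oppr_eq0 oner_eq0.
Qed.

End PythagoreanArrangement.

Theorem lemma5p4 (R : realType) (n d : nat) (E : finType)
    (end1 end2 : E -> 'I_n) (phi : E -> R) (Q : 'I_n -> 'rV[R]_d) :
  (forall e : E, end1 e != end2 e) ->
  (forall e : E, Q (end1 e) != Q (end2 e)) ->
  (exists P, inter end1 end2 phi Q [set: E] P) ->
  balanced end1 end2 phi [set: E] /\
  exists k : nat,
    affine_dim (inter end1 end2 phi Q [set: E]) k /\
    (exists F : {set E}, #|F| = (d - k)%N /\
       (forall P, inter end1 end2 phi Q F P <-> inter end1 end2 phi Q [set: E] P)) /\
    (forall F : {set E}, #|F| = (d - k)%N ->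
       (forall P, inter end1 end2 phi Q F P <-> inter end1 end2 phi Q [set: E] P) ->
       forest end1 end2 F).
Proof.
move=> _ _ [P0 sP0]; split; first exact: inter_balanced sP0.
set B := normal_mx end1 end2 Q [set: E].
have dimK : (d - \rank (kermx B^T))%N = \rank B.
  by rewrite mxrank_ker mxrank_tr; have := rank_leq_col B; lia.
exists (\rank (kermx B^T)); rewrite dimK; split; [|split].
- by apply: (affine_dim_submx (P0 := P0)) => P; exact: inter_kermx sP0.
- have [F [cardF BF]] := normal_mx_spanning_edges end1 end2 Q.
  exists F; split=> // P; split; last exact: inter_subset (subsetT F).
  rewrite (inter_kermx _ (inter_subset (subsetT F) sP0)) (inter_kermx _ sP0).
  by move/submx_trans; apply; apply: kermx_trS.
- move=> F cardF sF; apply/row_free_normal_mx_forest/(row_free_kermx_tr cardF).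
  by apply: (inter_kermxS sP0) => P /sF.
Qed.
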